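(* Let $q\ge 3$ be a prime power, $n\ge 2d\ge 2$, $0\le i\le d$, $1\le j\le d$, $h_{\max}=\min\{i,d-j\}$ and $c=g_{h_{\max}}(i,j)$. If it is not the case that ($n=2d$ and $d-j\le i$), then $$\tfrac49 q^{c}<|G_j(i)|<4q^{c}.$$ If $n=2d$ and $d-j\le i$, then $$1\ge \frac{|G_j(i)|}{|T_{d-j}(i,j)|}\ge \frac{5}{32}.$$
   Context: For integers $m\ge 0$ and $l$, ${m\brack l}=\prod_{t=1}^{l}\frac{q^{m-t+1}-1}{q^t-1}$ for $l\ge0$ and $0$ for $l<0$. For $0\le i,j\le d$, $$G_j(i)=\sum_{h=\max\{0,i-j\}}^{\min\{i,d-j\}}(-1)^{i-h}q^{j(j-i+h)+\binom{i-h}{2}}{i\brack h}{d-h\brack j}{n-d-i+h\brack n-d-j}$$ (the eigenvalues of the Grassmann graph $G_q(n,d,j)$), and $T_h(i,j)$ is the $h$-th summand (and $0$ for $h$ outside the summation range). Also $$g_h(i,j)=-\tfrac12h^2+h\left(n-d-j+\tfrac12\right)+j(d-j)+\tfrac{i(i-1)}{2}+(n-d)(j-i).$$ *)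

From mathcomp Require Import all_boot all_order all_algebra.
Set Implicit Arguments. Unset Strict Implicit. Unset Printing Implicit Defensive.
Import Order.TTheory GRing.Theory Num.Theory.
Local Open Scope ring_scope.

Definition qbin (q : rat) (m : nat) (l : int) : rat :=
  match l with
  | Posz l' => \prod_(1 <= t < l'.+1)
                 ((q ^ (m%:Z - t%:Z + 1) - 1) / (q ^ (t%:Z) - 1))
  | Negz _ => 0
  end.

(* h-th summand T_h(i,j) of G_j(i) for the Grassmann graph with parameters
   q, n, d; it is 0 for h outside [max(0,i-j), min(i,d-j)]. *)
Definition Tsum (q : rat) (n d i j h : nat) : rat :=
  if ((i - j)%N <= h)%N && (h <= minn i (d - j))%N then
    (-1) ^+ (i - h) *
    q ^ ((j%:Z * (j%:Z - i%:Z + h%:Z)) + ('C(i - h, 2))%:Z) *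
    qbin q i h%:Z * qbin q (d - h) j%:Z *
    qbin q (n - d - i + h) (n%:Z - d%:Z - j%:Z)
  else 0.

Definition Geig (q : rat) (n d i j : nat) : rat :=
  \sum_((i - j)%N <= h < (minn i (d - j)).+1) Tsum q n d i j h.

Definition gexp (n d i j h : nat) : rat :=
  - (h%:R ^+ 2) / 2 + h%:R * ((n%:R - d%:R - j%:R) + 1 / 2)
  + j%:R * (d%:R - j%:R) + i%:R * (i%:R - 1) / 2
  + (n%:R - d%:R) * (j%:R - i%:R).

Definition prime_power (q : nat) : Prop :=
  exists p k : nat, prime p /\ (0 < k)%N /\ q = (p ^ k)%N.

From mathcomp Require Import all_boot all_order all_algebra.
From mathcomp Require Import lra ring zify.
Import Order.TTheory GRing.Theory Num.Theory.
Set Implicit Arguments. Unset Strict Implicit. Unset Printing Implicit Defensive.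
Local Open Scope ring_scope.

(* G_j(i) is an alternating sum of the terms |T_h(i,j)|, each a power of q
   times three Gaussian binomials [c + b choose b]_q, and such a binomial lies
   in [q^(cb), 2 q^(cb)) when q >= 3.  Comparing consecutive binomials gives
   4 q^(n-d-j-h) |T_h| <= 9 |T_(h+1)|, so the terms grow at least by the
   factor 4/3, and even by 4 unless n = 2d and the top index is d - j.  An
   alternating sum of nonnegative terms a_h <= rho a_(h+1) lies between
   (1 - rho) a_H and its last term a_H; and the last term |T_H|, with
   H = min(i, d - j), lies in [q^c, 4 q^c) because one of its three Gaussian
   binomials is trivial. *)

Lemma alternating_sum_bounds (R : realDomainType) (a : nat -> R) (rho : R) k :
  0 <= rho <= 1 -> (forall h, (h <= k)%N -> 0 <= a h) ->
  (forall h, (h < k)%N -> a h <= rho * a h.+1) ->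
  (1 - rho) * a k <= \sum_(h < k.+1) (-1) ^+ (k - h) * a h <= a k.
Proof.
move=> /andP[rho_ge0 rho_le1]; elim: k => [|k IHk] a_ge0 a_le.
  rewrite big_ord1 /= expr0 mul1r.
  by have := mulr_ge0 rho_ge0 (a_ge0 0%N isT) => ?; apply/andP; split; lra.
rewrite big_ord_recr /= subnn expr0 mul1r.
have -> : \sum_(h < k.+1) (-1) ^+ (k.+1 - h) * a h = - \sum_(h < k.+1) (-1) ^+ (k - h) * a h.
  rewrite -sumrN; apply: eq_bigr => h _; have := ltn_ord h; rewrite ltnS => h_le_k.
  by rewrite subSn // exprS mulN1r mulNr.
have /andP[lo hi] := IHk (fun h hk => a_ge0 h (leqW hk)) (fun h hk => a_le h (ltnW hk)).
have rho_ak : rho * a k <= a k by rewrite ler_piMl // a_ge0.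
have := a_le k (ltnSn k).
by move=> *; apply/andP; split; lra.
Qed.

Section Estimates.
Variables (R : realFieldType) (q : R).
Hypothesis q_ge3 : 3 <= q.

Lemma expq_ge1 n : 1 <= q ^+ n.
Proof. by apply: exprn_ege1; have := q_ge3; lra. Qed.

Lemma expq_gt0 n : 0 < q ^+ n.
Proof. by apply: exprn_gt0; have := q_ge3; lra. Qed.

Lemma q_ge0 : 0 <= q.
Proof. by have := q_ge3; lra. Qed.

Lemma expq_ge0 n : 0 <= q ^+ n.
Proof. exact: ltW (expq_gt0 n). Qed.

Lemma expqS_ge3 n : 3 <= q ^+ n.+1.
Proof. by rewrite exprS; have := expq_ge1 n; have := q_ge3; nra. Qed.

Lemma expqSS_ge9 n : 9 <= q ^+ n.+2.
Proof. by rewrite exprS; have := expqS_ge3 n; have := q_ge3; nra. Qed.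

Lemma expqS_subr1_gt0 n : 0 < q ^+ n.+1 - 1.
Proof. by have := expqS_ge3 n; lra. Qed.

Lemma expqS_subr1_ge n : 2 * q ^+ n.+1 <= 3 * (q ^+ n.+1 - 1).
Proof. by have := expqS_ge3 n; lra. Qed.

Lemma expqD_subr1_ge m n : q ^+ m * (q ^+ n - 1) <= q ^+ (m + n) - 1.
Proof. by rewrite exprD; have := expq_ge1 m; nra. Qed.

(* Unnormalised q-factorial: the factors (q - 1) cancel in [qbinom]. *)
Definition qfact n := \prod_(0 <= t < n) (q ^+ t.+1 - 1).

Lemma qfactS n : qfact n.+1 = qfact n * (q ^+ n.+1 - 1).
Proof. by rewrite /qfact big_nat_recr. Qed.

Lemma qfact_gt0 n : 0 < qfact n.
Proof.
elim: n => [|n IHn]; first by rewrite /qfact big_nil.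
by rewrite qfactS mulr_gt0 // expqS_subr1_gt0.
Qed.

(* [qbinom c b] is [c + b choose b]_q, indexed by the two parts so that no
   truncated subtraction occurs. *)
Fact qbinom_key : unit. Proof. exact: tt. Qed.
Definition qbinom c b := locked_with qbinom_key (qfact (c + b) / (qfact b * qfact c)).

Lemma qbinom0l b : qbinom 0 b = 1.
Proof. by rewrite /qbinom !unlock /qfact big_nil mulr1 divff // gt_eqF // qfact_gt0. Qed.

Lemma qbinom0r c : qbinom c 0 = 1.
Proof. by rewrite /qbinom !unlock /qfact big_nil mul1r addn0 divff // gt_eqF // qfact_gt0. Qed.

Lemma qbinom_gt0 c b : 0 < qbinom c b.
Proof. by rewrite /qbinom unlock divr_gt0 ?mulr_gt0 ?qfact_gt0. Qed.

Lemma qbinom_ge0 c b : 0 <= qbinom c b.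
Proof. exact: ltW (qbinom_gt0 c b). Qed.

Let qfact_neq0 n : qfact n != 0. Proof. by rewrite gt_eqF ?qfact_gt0. Qed.
Let expqS_subr1_neq0 n : q ^+ n.+1 - 1 != 0. Proof. by rewrite gt_eqF ?expqS_subr1_gt0. Qed.

Lemma qbinomSr c b : qbinom c b.+1 * (q ^+ b.+1 - 1) = qbinom c b * (q ^+ (c + b).+1 - 1).
Proof. by rewrite /qbinom !unlock addnS !qfactS; field; rewrite !qfact_neq0 expqS_subr1_neq0. Qed.

Lemma qbinomSl c b : qbinom c.+1 b * (q ^+ c.+1 - 1) = qbinom c b * (q ^+ (c + b).+1 - 1).
Proof. by rewrite /qbinom !unlock addSn !qfactS; field; rewrite !qfact_neq0 expqS_subr1_neq0. Qed.

Lemma qbinom_exchange c b : qbinom c b.+1 * (q ^+ b.+1 - 1) = qbinom c.+1 b * (q ^+ c.+1 - 1).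
Proof. by rewrite qbinomSr qbinomSl. Qed.

Lemma qbinomSl_ge c b : q ^+ b * qbinom c b <= qbinom c.+1 b.
Proof.
rewrite -(ler_pM2r (expqS_subr1_gt0 c)) qbinomSl -mulrA mulrCA ler_pM2l ?qbinom_gt0 //.
by rewrite addnC -addnS expqD_subr1_ge.
Qed.

Lemma qbinomSl_le c b : 2 * qbinom c.+1 b <= 3 * q ^+ b * qbinom c b.
Proof.
rewrite -(ler_pM2r (expq_gt0 c.+1)).
have W_bound := ler_wpM2l (ltW (qbinom_gt0 c.+1 b)) (expqS_subr1_ge c).
have Z_bound : qbinom c b * (q ^+ (c + b).+1 - 1) <= qbinom c b * (q ^+ b * q ^+ c.+1).
  by rewrite -exprD addnS addnC ler_wpM2l ?qbinom_ge0 // lerBlDr lerDl.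
rewrite -qbinomSl in Z_bound.
lra.
Qed.

Lemma qbinom_exchange_le c b : 2 * q ^+ c * qbinom c.+1 b <= 3 * q ^+ b * qbinom c b.+1.
Proof.
rewrite -(ler_pM2r (_ : 0 < q)); last by have := q_ge3; lra.
have W_bound := ler_wpM2l (ltW (qbinom_gt0 c.+1 b)) (expqS_subr1_ge c).
have V_bound : qbinom c b.+1 * (q ^+ b.+1 - 1) <= qbinom c b.+1 * (q ^+ b * q).
  by rewrite -exprSr ler_wpM2l ?qbinom_ge0 // lerBlDr lerDl.
rewrite qbinom_exchange exprSr in V_bound.
rewrite exprSr in W_bound.
lra.
Qed.

Lemma qbinom_ge c b : q ^+ (c * b) <= qbinom c b.
Proof.
elim: c => [|c IHc]; first by rewrite mul0n expr0 qbinom0l.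
apply: le_trans (qbinomSl_ge c b).
by rewrite mulSn exprD ler_pM2l ?expq_gt0.
Qed.

Lemma expq_mulD1_le b : q ^+ b * (q ^+ b.+1 + 1) <= (q ^+ b.+1 - 1) * (q ^+ b + 1).
Proof. by rewrite exprS; have := expq_ge1 b; have := q_ge3; nra. Qed.

(* The strengthened bound [qbinom c b <= 2 q^(cb) q^b / (q^b + 1)] is what
   makes the induction on b go through. *)
Lemma qbinom_mulD1_le c b : qbinom c b * (q ^+ b + 1) <= 2 * q ^+ (c * b) * q ^+ b.
Proof.
elim: b => [|b IHb]; first by rewrite muln0 qbinom0r !expr0; lra.
have X_ge1 := expq_ge1 b; have Y_ge3 := expqS_ge3 b.
rewrite -(ler_pM2r (_ : 0 < (q ^+ b.+1 - 1) * (q ^+ b + 1))); last first.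
  by rewrite mulr_gt0 ?expqS_subr1_gt0 //; lra.
have -> : qbinom c b.+1 * (q ^+ b.+1 + 1) * ((q ^+ b.+1 - 1) * (q ^+ b + 1)) =
    qbinom c b.+1 * (q ^+ b.+1 - 1) * ((q ^+ b.+1 + 1) * (q ^+ b + 1)) by ring.
rewrite qbinomSr mulnS exprD.
have shift : qbinom c b * (q ^+ (c + b).+1 - 1) <= qbinom c b * (q ^+ c * q ^+ b.+1).
  by rewrite -exprD addnS ler_wpM2l ?qbinom_ge0 // lerBlDr lerDl.
have K1 : 0 <= (q ^+ b.+1 + 1) * (q ^+ b + 1) by apply: mulr_ge0; lra.
have K2 : 0 <= q ^+ c * q ^+ b.+1 * (q ^+ b.+1 + 1).
  by apply: mulr_ge0; [apply: mulr_ge0; exact: expq_ge0 | lra].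
have K3 : 0 <= 2 * q ^+ (c * b) * q ^+ c * q ^+ b.+1.
  by do ![apply: mulr_ge0 | exact: expq_ge0 | exact: ler0n].
have := ler_wpM2r K1 shift; have := ler_wpM2r K2 IHb.
have := ler_wpM2l K3 (expq_mulD1_le b).
lra.
Qed.

Lemma qbinom_lt c b : qbinom c b < 2 * q ^+ (c * b).
Proof.
have := qbinom_mulD1_le c b; have := expq_ge1 b; have := expq_gt0 (c * b).
have := qbinom_gt0 c b; nra.
Qed.

Lemma qbinom_mul_lt c b c' b' : (c = 0 \/ c' = 0)%N ->
  qbinom c b * qbinom c' b' < 2 * (q ^+ (c * b) * q ^+ (c' * b')).
Proof.
case=> ->; rewrite qbinom0l mul0n expr0 ?mul1r ?mulr1; exact: qbinom_lt.
Qed.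

(* [Tabs i j d (n - d) h] is |T_h(i,j)|, see [Tsum_Tabs]. *)
Definition Tabs (i j d m h : nat) :=
  q ^+ (j * (j + h - i) + 'C(i - h, 2)) *
  qbinom (i - h) h * qbinom (d - h - j) j * qbinom (j + h - i) (m - j).

Lemma Tabs_ratio i j d m h : (h < i)%N -> (h < d - j)%N -> (i <= j + h)%N -> (d <= m)%N ->
  4 * q ^+ (m - j - h) * Tabs i j d m h <= 9 * Tabs i j d m h.+1.
Proof.
move=> h_lt_i h_lt_dj i_le_jh d_le_m; rewrite /Tabs.
have -> : (i - h = (i - h.+1).+1)%N by lia.
have -> : (d - h - j = (d - h.+1 - j).+1)%N by lia.
have -> : (j + h.+1 - i = (j + h - i).+1)%N by lia.
have [dl ->] : exists dl, m = (j + h.+1 + dl)%N by exists (m - j - h.+1)%N; lia.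
have -> : (j + h.+1 + dl - j - h = dl.+1)%N by lia.
have -> : (j + h.+1 + dl - j = h.+1 + dl)%N by lia.
set c1 := (i - h.+1)%N; set c2 := (d - h.+1 - j)%N; set c3 := (j + h - i)%N.
rewrite binS bin1 mulnS !exprD !exprS.
have R3 := qbinomSl_ge c3 (h.+1 + dl); rewrite exprD exprS in R3.
have P : 2 * q ^+ c1 * qbinom c1.+1 h * (2 * qbinom c2.+1 j) *
           (q * q ^+ h * q ^+ dl * qbinom c3 (h.+1 + dl)) <=
         3 * q ^+ h * qbinom c1 h.+1 * (3 * q ^+ j * qbinom c2 j) * qbinom c3.+1 (h.+1 + dl).
  apply: ler_pM (ler_pM _ _ (qbinom_exchange_le c1 h) (qbinomSl_le c2 j)) R3;
  by do ![apply: mulr_ge0 | exact: qbinom_ge0 | exact: expq_ge0 | exact: ler0n | exact: q_ge0].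
rewrite -(ler_pM2l (expq_gt0 h)).
have := ler_wpM2l (mulr_ge0 (expq_ge0 (j * c3)) (expq_ge0 'C(c1, 2))) P.
lra.
Qed.

Definition Texp i j d m h :=
  (j * (j + h - i) + 'C(i - h, 2) + (i - h) * h + (d - h - j) * j + (j + h - i) * (m - j))%N.

Lemma Tabs_ge i j d m h : q ^+ Texp i j d m h <= Tabs i j d m h.
Proof.
rewrite /Tabs /Texp !exprD.
apply: ler_pM _ _ (ler_pM _ _ (ler_pM _ _ (lexx _) (qbinom_ge _ _)) (qbinom_ge _ _))
  (qbinom_ge _ _); by do ![apply: mulr_ge0 | exact: qbinom_ge0 | exact: expq_ge0].
Qed.

Lemma Tabs_lt i j d m h : (i - h = 0 \/ d - h - j = 0)%N ->
  Tabs i j d m h < 4 * q ^+ Texp i j d m h.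
Proof.
move=> /(@qbinom_mul_lt _ h _ j) lt12; rewrite /Tabs /Texp !exprD.
have := ltr_pM (mulr_ge0 (qbinom_ge0 _ _) (qbinom_ge0 _ _)) (qbinom_ge0 _ _)
  lt12 (qbinom_lt (j + h - i) (m - j)).
rewrite -(ltr_pM2l (mulr_gt0 (expq_gt0 (j * (j + h - i))) (expq_gt0 'C(i - h, 2)))).
lra.
Qed.

Lemma Tabs_gt0 i j d m h : 0 < Tabs i j d m h.
Proof. exact: lt_le_trans (expq_gt0 _) (Tabs_ge i j d m h). Qed.

Lemma Tabs_ge0 i j d m h : 0 <= Tabs i j d m h.
Proof. exact: ltW (Tabs_gt0 i j d m h). Qed.

Lemma Tabs_le_rho (rho : R) i j d m h :
  (h < i)%N -> (h < d - j)%N -> (i <= j + h)%N -> (d <= m)%N -> 0 <= rho ->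
  9 <= 4 * q ^+ (m - j - h) * rho -> Tabs i j d m h <= rho * Tabs i j d m h.+1.
Proof.
move=> h_lt_i h_lt_dj i_le_jh d_le_m rho_ge0 rho_big.
have ratio := ler_wpM2l rho_ge0 (Tabs_ratio h_lt_i h_lt_dj i_le_jh d_le_m).
have := ler_wpM2r (Tabs_ge0 i j d m h) rho_big.
lra.
Qed.

End Estimates.

Lemma natr_bin2 (R : comPzRingType) k : 'C(k, 2)%:R * 2 = k%:R * (k%:R - 1) :> R.
Proof.
elim: k => [|k IHk]; first by rewrite bin0n !mul0r.
by rewrite binS bin1 natrD mulrDl IHk -addn1 natrD; ring.
Qed.

Lemma qbin_qbinom (q : rat) a b : 3 <= q -> (b <= a)%N -> qbin q a b = qbinom q (a - b) b.
Proof.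
move=> q_ge3; elim: b => [|b IHb] b_lt_a; first by rewrite /qbin big_nil subn0 qbinom0r.
have -> : qbin q a b.+1 =
    qbin q a b * ((q ^ (a%:Z - b.+1%:Z + 1) - 1) / (q ^ b.+1%:Z - 1)).
  by rewrite /qbin big_nat_recr.
rewrite IHb; last exact: ltnW.
have -> : a%:Z - b.+1%:Z + 1 = (a - b)%N by lia.
have -> : (a - b = (a - b.+1).+1)%N by lia.
rewrite -!exprnP mulrA -qbinom_exchange // mulfK // gt_eqF // expqS_subr1_gt0 //.
Qed.

Lemma Tsum_Tabs (q : rat) n d i j h : 3 <= q -> (2 * d <= n)%N -> (i <= d)%N -> (j <= d)%N ->
  (i - j <= h)%N -> (h <= minn i (d - j))%N ->
  Tsum q n d i j h = (-1) ^+ (i - h) * Tabs q i j d (n - d) h.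
Proof.
move=> q_ge3 d_le_n i_le_d j_le_d lo_le_h h_le_hi.
rewrite /Tsum lo_le_h h_le_hi /Tabs.
have -> : j%:Z * (j%:Z - i%:Z + h%:Z) + ('C(i - h, 2))%:Z = (j * (j + h - i) + 'C(i - h, 2))%N.
  by rewrite PoszD PoszM; congr (_ * _ + _); lia.
have -> : n%:Z - d%:Z - j%:Z = (n - d - j)%N by lia.
rewrite -exprnP !qbin_qbinom //; try lia.
have -> : (n - d - i + h - (n - d - j) = j + h - i)%N by lia.
by rewrite !mulrA.
Qed.

Lemma Texp_gexp n d i j h : (2 * d <= n)%N -> (j <= d)%N ->
  (h <= i)%N -> (h <= d - j)%N -> (i <= j + h)%N ->
  (Texp i j d (n - d) h)%:R = gexp n d i j h.
Proof.
move=> d_le_n j_le_d h_le_i h_le_dj i_le_jh.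
have C2 : ('C(i - h, 2))%:R = (i%:R - h%:R) * (i%:R - h%:R - 1) / 2 :> rat.
  by rewrite -natrB // -natr_bin2 mulfK.
rewrite /Texp /gexp !natrD !natrM C2 !natrB //; try lia.
by field.
Qed.

Lemma Geig_alternating (q : rat) n d i j : 3 <= q -> (2 * d <= n)%N -> (i <= d)%N -> (j <= d)%N ->
  Geig q n d i j = (-1) ^+ (i - minn i (d - j)) *
    \sum_(t < (minn i (d - j) - (i - j)).+1)
      (-1) ^+ (minn i (d - j) - (i - j) - t) * Tabs q i j d (n - d) (t + (i - j)).
Proof.
move=> q_ge3 d_le_n i_le_d j_le_d.
rewrite /Geig -{1}[(i - j)%N]add0n big_addn big_mkord mulr_sumr.
have -> : ((minn i (d - j)).+1 - (i - j) = (minn i (d - j) - (i - j)).+1)%N by lia.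
apply: eq_bigr => t _; have := ltn_ord t => t_le.
rewrite Tsum_Tabs //; try lia.
have -> : (i - (t + (i - j)) = i - minn i (d - j) + (minn i (d - j) - (i - j) - t))%N by lia.
by rewrite exprD -mulrA.
Qed.

Lemma Geig_bounds (q rho : rat) n d i j : 3 <= q -> (2 * d <= n)%N -> (i <= d)%N -> (j <= d)%N ->
  0 <= rho <= 1 ->
  (forall h, (i - j <= h < minn i (d - j))%N -> 9 <= 4 * q ^+ (n - d - j - h) * rho) ->
  (1 - rho) * Tabs q i j d (n - d) (minn i (d - j)) <= `|Geig q n d i j|
    <= Tabs q i j d (n - d) (minn i (d - j)).
Proof.
move=> q_ge3 d_le_n i_le_d j_le_d rho01 rho_big; have /andP[rho_ge0 rho_le1] := rho01.
rewrite Geig_alternating // normrM normr_sign mul1r.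
have [K eK] : exists K, minn i (d - j) = (K + (i - j))%N.
  by exists (minn i (d - j) - (i - j))%N; rewrite subnK //; lia.
rewrite eK addnK; set a := fun t => Tabs q i j d (n - d) (t + (i - j)).
have a_ge0 t : (t <= K)%N -> 0 <= a t by move=> _; exact: Tabs_ge0.
have a_le t : (t < K)%N -> a t <= rho * a t.+1.
  by move=> t_lt_K; apply: (Tabs_le_rho q_ge3) => //; try lia; apply: rho_big; lia.
have /andP[lo hi] := alternating_sum_bounds rho01 a_ge0 a_le.
rewrite ger0_norm ?lo ?hi //.
by apply: le_trans lo; rewrite mulr_ge0 ?a_ge0 ?subr_ge0.
Qed.

Lemma Geig_bounds_generic (q : rat) n d i j :
  3 <= q -> (2 * d <= n)%N -> (i <= d)%N -> (j <= d)%N -> ~ (n = (2 * d)%N /\ (d - j <= i)%N) ->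
  3 / 4 * Tabs q i j d (n - d) (minn i (d - j)) <= `|Geig q n d i j|
    <= Tabs q i j d (n - d) (minn i (d - j)).
Proof.
move=> q_ge3 d_le_n i_le_d j_le_d generic.
have -> : 3 / 4 = 1 - 1 / 4 :> rat by field.
apply: Geig_bounds => // h /andP[_ h_lt_H].
have [e ->] : exists e, (n - d - j - h = e.+2)%N by exists (n - d - j - h - 2)%N; lia.
by have := expqSS_ge9 q_ge3 e; lra.
Qed.

Lemma Geig_bounds_exceptional (q : rat) n d i j :
  3 <= q -> (i <= d)%N -> (j <= d)%N -> n = (2 * d)%N -> (d - j <= i)%N ->
  1 / 4 * Tabs q i j d (n - d) (d - j) <= `|Geig q n d i j| <= Tabs q i j d (n - d) (d - j).
Proof.
move=> q_ge3 i_le_d j_le_d n_eq dj_le_i.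
have d_le_n : (2 * d <= n)%N by rewrite n_eq.
have -> : 1 / 4 = 1 - 3 / 4 :> rat by field.
rewrite -[in X in _ <= _ <= X](minn_idPr dj_le_i) -[in X in X <= _](minn_idPr dj_le_i).
apply: Geig_bounds => // h /andP[_ h_lt_H].
have [e ->] : exists e, (n - d - j - h = e.+1)%N by exists (n - d - j - h - 1)%N; lia.
by have := expqS_ge3 q_ge3 e; lra.
Qed.

Theorem lemma3p2 (q n d i j : nat) :
  prime_power q -> (3 <= q)%N ->
  (2 * d <= n)%N -> (1 <= d)%N ->
  (i <= d)%N -> (1 <= j)%N -> (j <= d)%N ->
  (~ (n = (2 * d)%N /\ (d - j <= i)%N) ->
     exists c : int,
       (c%:~R : rat) = gexp n d i j (minn i (d - j)) /\
       (4 / 9) * (q%:R : rat) ^ c < `|Geig q%:R n d i j| /\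
       `|Geig q%:R n d i j| < 4 * (q%:R : rat) ^ c) /\
  ((n = (2 * d)%N /\ (d - j <= i)%N) ->
     `|Geig q%:R n d i j| / `|Tsum q%:R n d i j (d - j)| <= 1 /\
     5 / 32 <= `|Geig q%:R n d i j| / `|Tsum q%:R n d i j (d - j)|).
Proof.
move=> _ q_ge3 d_le_n _ i_le_d _ j_le_d.
have Q : 3 <= q%:R :> rat by rewrite ler_nat.
split=> [generic | [n_eq dj_le_i]].
  have /andP[G_ge G_le] := Geig_bounds_generic Q d_le_n i_le_d j_le_d generic.
  have top_trivial : (i - minn i (d - j) = 0 \/ d - minn i (d - j) - j = 0)%N by lia.
  have T_lt := Tabs_lt Q (n - d) top_trivial.
  have T_ge := Tabs_ge Q i j d (n - d) (minn i (d - j)).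
  have E_gt0 := expq_gt0 Q (Texp i j d (n - d) (minn i (d - j))).
  exists (Texp i j d (n - d) (minn i (d - j))); rewrite -exprnP; split; last lra.
  by apply: (Texp_gexp d_le_n j_le_d); lia.
have /andP[G_ge G_le] := Geig_bounds_exceptional Q i_le_d j_le_d n_eq dj_le_i.
have T_gt0 := Tabs_gt0 Q i j d (n - d) (d - j).
have lo_le_dj : (i - j <= d - j)%N by lia.
have dj_le_hi : (d - j <= minn i (d - j))%N by lia.
rewrite (Tsum_Tabs Q d_le_n i_le_d j_le_d lo_le_dj dj_le_hi) normrM normr_sign mul1r.
by rewrite (ger0_norm (ltW T_gt0)) ler_pdivrMr ?ler_pdivlMr; lra.
Qed.
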